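(* Let $P$ be a point of $\mathrm{PG}(2,q^3)$ with $P\neq T$, $P$ not on the line $m_T$ and $P\notin\mathcal P_{2,q}$. Then $P$ lies in the Fig-block $\mathrm{Fig}(T)$ if and only if the projection of $\mathcal P_{2,q}$ from $P$ onto $m_T$, i.e. $\{PQ\cap m_T:Q\in\mathcal P_{2,q}\}$, is a $T$-sls (that is, one of the sets $\mathcal S_\theta=\{(x\theta,x^q,0):x\in\mathbb{F}_{q^3}^*\}$, $\theta\in\mathbb{F}_{q^3}^*$; equivalently a scattered $\mathbb{F}_q$-linear set of pseudoregulus type with transversal points $T^\phi$, $T^{\phi^2}$).
   Context: Let $q$ be a prime power, $\mathbb{F}_{q^3}^*=\mathbb{F}_{q^3}\setminus\{0\}$. Points of $\mathrm{PG}(2,q^3)$ have homogeneous coordinates $(x,y,z)$ and lines $[a,b,c]$. Let $\phi$ be the collineation $(x,y,z)\mapsto(z^q,x^q,y^q)$ (on lines $[d,e,f]\mapsto[f^q,d^q,e^q]$), whose fixed points form the subplane $\mathcal P_{2,q}=\{(x,x^q,x^{q^2}):x\in\mathbb{F}_{q^3}^*\}$. A point has Type II (resp. III) if its $\phi$-orbit is three collinear (resp. non-collinear) points; a line has Type III if its $\phi$-orbit is three non-concurrent lines. For a Type III point $X$, the Fig-block is $\mathrm{Fig}(X)=\mathcal E_X\cup\mathcal F_X$, where $\mathcal E_X$ is the set of Type II points on the line $X^\phi X^{\phi^2}$ and $\mathcal F_X=\{\ell^\phi\cap\ell^{\phi^2}:\ell\text{ a Type III line through }X\}$. Let $T=(0,0,1)$,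 $T^\phi=(1,0,0)$, $T^{\phi^2}=(0,1,0)$, and $m_T=T^\phi T^{\phi^2}$ the line $[0,0,1]$. *)

(* Projective plane PG(2, F) over a finite field F = F_{q^3}:
   points and lines are nonzero coordinate triples, considered up to nonzero
   scalars; every predicate below is invariant under rescaling. *)
From mathcomp Require Import all_boot all_algebra.
Set Implicit Arguments. Unset Strict Implicit. Unset Printing Implicit Defensive.
Import GRing.Theory.
Local Open Scope ring_scope.

Record vec3 (F : Type) := V3 { c1 : F; c2 : F; c3 : F }.

Section Plane.
Variables (F : fieldType) (q : nat).
Implicit Types (u v w P Q R X l : vec3 F).

Definition nz v : Prop := ~ (c1 v = 0 /\ c2 v = 0 /\ c3 v = 0).
Definition scale (c : F) v := V3 (c * c1 v) (c * c2 v) (c * c3 v).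
Definition prop u v : Prop := exists c : F, c != 0 /\ u = scale c v.

Definition dot u v : F := c1 u * c1 v + c2 u * c2 v + c3 u * c3 v.
(* line through two points / intersection point of two lines *)
Definition cross u v : vec3 F :=
  V3 (c2 u * c3 v - c3 u * c2 v) (c3 u * c1 v - c1 u * c3 v)
     (c1 u * c2 v - c2 u * c1 v).
Definition det3 u v w : F := dot u (cross v w).

Definition onl P l : Prop := dot l P = 0.

(* the collineation phi: on points (x,y,z) |-> (z^q,x^q,y^q);
   on lines [d,e,f] |-> [f^q,d^q,e^q] (same coordinate formula) *)
Definition phi v : vec3 F := V3 (c3 v ^+ q) (c1 v ^+ q) (c2 v ^+ q).

Definition distinct3 u v w : Prop := ~ prop u v /\ ~ prop v w /\ ~ prop u w.

Definition typeII_pt X : Prop :=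
  nz X /\ distinct3 X (phi X) (phi (phi X)) /\ det3 X (phi X) (phi (phi X)) = 0.
Definition typeIII_pt X : Prop :=
  nz X /\ distinct3 X (phi X) (phi (phi X)) /\ det3 X (phi X) (phi (phi X)) != 0.
Definition typeIII_line l : Prop :=
  nz l /\ distinct3 l (phi l) (phi (phi l)) /\ det3 l (phi l) (phi (phi l)) != 0.

Definition inE X P : Prop := typeII_pt P /\ onl P (cross (phi X) (phi (phi X))).
Definition inFF X P : Prop :=
  nz P /\ exists l, typeIII_line l /\ onl X l /\ prop P (cross (phi l) (phi (phi l))).
Definition inFig X P : Prop := inE X P \/ inFF X P.

Definition frob_pt (x : F) : vec3 F := V3 x (x ^+ q) (x ^+ (q ^ 2)%N).
Definition inPsub P : Prop := exists x : F, x != 0 /\ prop P (frob_pt x).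

Definition T : vec3 F := V3 0 0 1.
(* m_T = T^phi T^phi^2 = [0,0,1] *)
Definition mT : vec3 F := V3 0 0 1.

Definition proj_from P R : Prop :=
  exists x : F, x != 0 /\ prop R (cross (cross P (frob_pt x)) mT).

Definition S_theta (th : F) R : Prop :=
  exists x : F, x != 0 /\ prop R (V3 (x * th) (x ^+ q) 0).

Definition is_Tsls (A : vec3 F -> Prop) : Prop :=
  exists th : F, th != 0 /\ forall R, nz R -> (A R <-> S_theta th R).

End Plane.

From mathcomp Require Import all_boot all_algebra all_field.
From mathcomp Require Import ring zify.
Import GRing.Theory.
Local Open Scope ring_scope.

(* Write P = p3 (a, b, 1), with p3 != 0 as P is off m_T, and let N be the norm
   of F_{q^3} over F_q.  E_T lies on m_T, and the Type III lines through T are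
   the [d, e, 0] with N(d) + N(e) != 0; their points l^phi ∩ l^phi^2 are the
   (a, b, 1) with a b^q = 1 and N(b) != 1.  The projection of (x, x^q, x^q^2)
   from P onto m_T is (x - a x^q^2, x^q - b x^q^2, 0).
   If a b^q = 1, scaling it by w = x - b^q^2 x^q, whose q-th power is the
   second coordinate, gives (-a y, y^q, 0) with y = w^(1+q^2); as N(b) != 1,
   x |-> w is bijective, so the projection is S_(-a).
   Conversely, if the projection is some S_theta then, since N(y^q) = N(y),
   its coordinates satisfy N(u) = N(theta) N(v) identically in x.  Expanded,
   this is a combination of seven monomials x^(i + q j + q^2 k) whose exponents
   are distinct modulo q^3 - 1 (for q = 2 some exceed q^3), so all coefficients
   vanish, and two of them give a b^q = 1.  Finally N(b) = 1 would force
   N(a) = 1, and then x - a x^q^2 has a nonzero root, which would put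
   T^phi^2 = (0, 1, 0) in S_theta. *)

Definition frob {R : ringType} (q : nat) (x : R) : R := x ^+ q.
Definition qnorm {R : ringType} (q : nat) (x : R) : R :=
  x * frob q x * frob q (frob q x).

Lemma frob1 {R : ringType} (q : nat) : frob q (1 : R) = 1.
Proof. exact: expr1n. Qed.

Lemma frobM {R : comRingType} (q : nat) (x y : R) :
  frob q (x * y) = frob q x * frob q y.
Proof. exact: exprMn. Qed.

Lemma qnormM {R : comRingType} (q : nat) (x y : R) :
  qnorm q (x * y) = qnorm q x * qnorm q y.
Proof. rewrite /qnorm !frobM; ring. Qed.

Section ProportionalVectors.
Context {F : fieldType}.
Implicit Types (u v w : vec3 F).

Lemma prop_refl u : prop u u.
Proof.
by exists 1; split; [exact: oner_neq0 | case: u => a b c; rewrite /scale /= !mul1r].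
Qed.

Lemma prop_sym {u v} : prop u v -> prop v u.
Proof.
case=> c [c0 ->]; exists c^-1; split; first by rewrite invr_eq0.
by case: v => a b d; rewrite /scale /= !mulrA !mulVf // !mul1r.
Qed.

Lemma prop_trans {u v w} : prop u v -> prop v w -> prop u w.
Proof.
case=> c [c0 ->] [d [d0 ->]]; exists (c * d); split; first by rewrite mulf_neq0.
by case: w => a b e; rewrite /scale /= !mulrA.
Qed.

Lemma prop_scale c v : c != 0 -> prop (scale c v) v.
Proof. by move=> c0; exists c. Qed.

Lemma prop_scalel c u v : c != 0 -> prop (scale c u) v <-> prop u v.
Proof.
move=> c0; split=> [cuv | uv]; last exact: prop_trans (prop_scale c u c0) uv.
exact: prop_trans (prop_sym (prop_scale c u c0)) cuv.
Qed.

Lemma prop_scaler c u v : c != 0 -> prop u (scale c v) <-> prop u v.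
Proof.
move=> c0; split=> [ucv | uv]; first exact: prop_trans ucv (prop_scale c v c0).
exact: prop_trans uv (prop_sym (prop_scale c v c0)).
Qed.

Lemma det3_neq0_distinct u v w : det3 u v w != 0 -> nz u /\ distinct3 u v w.
Proof.
case: u v w => [u1 u2 u3] [v1 v2 v3] [w1 w2 w3].
rewrite /det3 /dot /cross /nz /distinct3 /prop /scale /= => /eqP det_neq0.
split; first by case=> [u10 [u20 u30]]; apply: det_neq0; rewrite u10 u20 u30; ring.
by split; [|split]; case=> c [_ [e1 e2 e3]]; apply: det_neq0; rewrite e1 e2 e3; ring.
Qed.

Lemma typeIII_lineE q (l : vec3 F) :
  typeIII_line q l <-> det3 l (phi q l) (phi q (phi q l)) != 0.
Proof.
split=> [[_ [_ //]] | det_neq0].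
by have [nz_l distinct_l] := det3_neq0_distinct _ _ _ det_neq0.
Qed.

Lemma is_Tsls_ext q (A B : vec3 F -> Prop) :
  (forall R, A R <-> B R) -> is_Tsls q A -> is_Tsls q B.
Proof.
by move=> AB [th [th0 A_S]]; exists th; split=> // R nzR; rewrite -AB; exact: A_S.
Qed.

End ProportionalVectors.

Lemma fin_expr_mod {F : finFieldType} (x : F) e :
  (0 < e)%N -> x ^+ (e.-1 %% #|F|.-1).+1 = x ^+ e.
Proof.
move=> e_gt0; have [->|x0] := eqVneq x 0; first by rewrite !expr0n !gtn_eqF.
have x_card1 : x ^+ #|F|.-1 = 1.
  apply: (mulIf x0); rewrite mul1r -exprSr prednK; last exact: ltnW (finNzRing_gt1 F).
  exact: expf_card.
by rewrite exprS expr_mod // -exprS prednK.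
Qed.

Lemma fin_monomials_free {F : finFieldType} (s : seq (F * nat)) :
  all (fun ce => 0 < ce.2)%N s -> uniq [seq ce.2 %% #|F|.-1 | ce <- s]%N ->
  (forall x : F, \sum_(ce <- s) ce.1 * x ^+ ce.2 = 0) ->
  all (fun ce => ce.1 == 0) s.
Proof.
move=> /allP s_pos uniq_mod sum0.
have F_gt1 := finNzRing_gt1 F.
pose red e := ((e.-1 %% #|F|.-1).+1)%N.
have red_mod e : (0 < e)%N -> (red e %% #|F|.-1 = e %% #|F|.-1)%N.
  by move=> e_gt0; rewrite /red -addn1 modnDml addn1 prednK.
pose p : {poly F} := \sum_(ce <- s) ce.1 *: 'X^(red ce.2).
have p0 : p = 0.
  apply: (@roots_geq_poly_eq0 _ _ (enum F)).
  - apply/allP => x _; rewrite /root horner_sum -[X in _ == X](sum0 x).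
    apply/eqP/eq_big_seq => ce /s_pos ce_pos.
    by rewrite hornerZ hornerXn fin_expr_mod.
  - exact: enum_uniq.
  - rewrite -cardE; apply: leq_trans (size_sum _ _ _) _.
    apply/bigmax_leqP_seq => ce _ _; apply: leq_trans (size_scale_leq _ _) _.
    by rewrite size_polyXn /red -ltn_predRL ltn_pmod // -subn1 subn_gt0.
have inj_red : {in s &, injective (fun ce => red ce.2)}.
  move=> c1 c2 c1s c2s /(congr1 (modn^~ #|F|.-1)).
  rewrite !red_mod ?s_pos // => e.
  rewrite -(nth_index c1 c1s) -(nth_index c1 c2s); congr nth.
  apply/(uniqP 0%N uniq_mod); rewrite ?inE ?size_map ?index_mem //.
  by rewrite !(nth_map c1) ?index_mem // !nth_index.
apply/allP => ce ce_s; have := congr1 (fun r : {poly F} => r`_(red ce.2)) p0.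
have uniq_s : uniq s := map_uniq uniq_mod.
rewrite coef0 coef_sum (bigD1_seq ce) //= coefZ coefXn eqxx mulr1 big1_seq ?addr0.
  by move=> <-.
move=> c2 /andP[c2_ce c2_s]; rewrite coefZ coefXn.
case: eqP => [e|]; last by rewrite mulr0.
by move: c2_ce; rewrite (inj_red _ _ c2_s ce_s (esym e)) eqxx.
Qed.

Lemma cubic_exponents_uniq q : (1 < q)%N ->
  uniq [seq e %% (q ^ 3).-1 | e <- [:: 1 + q * 1 + q * q * 1; 1 + q * 2 + q * q * 0;
     2 + q * 0 + q * q * 1; 2 + q * 1 + q * q * 0; 0 + q * 1 + q * q * 2;
     0 + q * 2 + q * q * 1; 1 + q * 0 + q * q * 2]]%N.
Proof.
move=> q_gt1; have [->|q_gt2] := eqVneq q 2%N; first by [].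
have q3 : (3 <= q)%N by lia.
rewrite (_ : (q ^ 3).-1 = q * (q * q) - 1)%N; last by rewrite !expnS expn0 muln1 subn1.
have qq : (3 * q <= q * q)%N by rewrite leq_mul2r q3 orbT.
have qqq : (3 * (q * q) <= q * (q * q))%N by rewrite leq_mul2r q3 orbT.
set Q := (q * q)%N in qq qqq *; set Q3 := (q * Q)%N in qqq *.
rewrite /= !modn_small; try lia.
rewrite !inE !negb_or; repeat (apply/andP; split); lia.
Qed.

Lemma frob_exponents_uniq q : (1 < q)%N ->
  uniq [seq e %% (q ^ 3).-1 | e <- [:: 1; q * q; q]]%N.
Proof.
move=> q_gt1; rewrite (_ : (q ^ 3).-1 = q * (q * q) - 1)%N; last first.
  by rewrite !expnS expn0 muln1 subn1.
have qq : (2 * q <= q * q)%N by rewrite leq_mul2r q_gt1 orbT.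
have qqq : (2 * (q * q) <= q * (q * q))%N by rewrite leq_mul2r q_gt1 orbT.
set Q := (q * q)%N in qq qqq *; set Q3 := (q * Q)%N in qqq *.
rewrite /= !modn_small; try lia.
by rewrite !inE !negb_or; repeat (apply/andP; split); lia.
Qed.

Lemma cubic_norm_form_expansion {R : comRingType} (A B C a a' a'' b b' b'' n : R) :
  (A - a * C) * (B - a' * A) * (C - a'' * B)
    - n * ((B - b * C) * (C - b' * A) * (A - b'' * B)) =
  (1 - a * a' * a'' - n * (1 - b * b' * b'')) * (A ^+ 1 * B ^+ 1 * C ^+ 1)
  + (- a'' - n * (b' * b'')) * (A ^+ 1 * B ^+ 2 * C ^+ 0)
  + (- a' - n * (b * b')) * (A ^+ 2 * B ^+ 0 * C ^+ 1)
  + (a' * a'' + n * b') * (A ^+ 2 * B ^+ 1 * C ^+ 0)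
  + (- a - n * (b * b'')) * (A ^+ 0 * B ^+ 1 * C ^+ 2)
  + (a * a'' + n * b'') * (A ^+ 0 * B ^+ 2 * C ^+ 1)
  + (a * a' + n * b) * (A ^+ 1 * B ^+ 0 * C ^+ 2).
Proof. ring. Qed.

Section CubicExtension.
Context {F : finFieldType} (q : nat).
Hypothesis q_prime_power : exists p k : nat, prime p /\ q = (p ^ k.+1)%N.
Hypothesis card_F : #|F| = (q ^ 3)%N.
Implicit Types (a b c d e x y w : F) (P R : vec3 F).

Lemma q_gt1 : (1 < q)%N.
Proof.
have [p [k [p_prime ->]]] := q_prime_power.
by rewrite -[1%N](expn0 p) ltn_exp2l ?prime_gt1.
Qed.

Lemma frob0 : frob q (0 : F) = 0.
Proof. by rewrite /frob expr0n gtn_eqF // ltnW // q_gt1. Qed.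

Lemma frobD x y : frob q (x + y) = frob q x + frob q y.
Proof.
have [p [k [p_prime q_def]]] := q_prime_power.
have pcharF : p \in [pchar F].
  by apply: (card_finPcharP (n := (k.+1 * 3)%N)); rewrite // card_F q_def expnM.
by rewrite /frob exprDn_pchar // q_def pnatX (pnatE _ p_prime) pcharF.
Qed.

Lemma frobN x : frob q (- x) = - frob q x.
Proof. by apply/eqP; rewrite -subr_eq0 opprK -frobD addNr frob0. Qed.

Lemma frobB x y : frob q (x - y) = frob q x - frob q y.
Proof. by rewrite frobD frobN. Qed.

Lemma frob3 x : frob q (frob q (frob q x)) = x.
Proof.
rewrite /frob -!exprM.
have -> : (q * (q * q) = #|F|)%N by rewrite card_F; lia.
exact: expf_card.
Qed.

Lemma frob_eq0 x : (frob q x == 0) = (x == 0).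
Proof.
by apply/eqP/eqP => [x0|->]; [rewrite -[x]frob3 x0 !frob0 | exact: frob0].
Qed.

Lemma qnorm_frob x : qnorm q (frob q x) = qnorm q x.
Proof. rewrite /qnorm frob3; ring. Qed.

Lemma frob_qnorm x : frob q (qnorm q x) = qnorm q x.
Proof. rewrite /qnorm !frobM frob3; ring. Qed.

Lemma qnormN x : qnorm q (- x) = - qnorm q x.
Proof. rewrite /qnorm !frobN; ring. Qed.

Lemma qnorm_eq0 x : (qnorm q x == 0) = (x == 0).
Proof. by rewrite /qnorm !mulf_eq0 !frob_eq0 !orbb. Qed.

Lemma frob_twist_eq0 c x : qnorm q c != 1 -> x = c * frob q x -> x = 0.
Proof.
move=> Nc1 x_def; apply/eqP; apply: contraNT Nc1 => x0.
have /(congr1 (qnorm q)) := x_def; rewrite qnormM qnorm_frob.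
by rewrite -[X in X = _]mul1r => /(mulIf _)->; rewrite ?qnorm_eq0.
Qed.

Lemma frob_twist_surj c w : qnorm q c != 1 -> exists x, x - c * frob q x = w.
Proof.
move=> Nc1; pose L x := x - c * frob q x.
have L_inj : injective L.
  move=> x y Lxy; apply/eqP; rewrite -subr_eq0; apply/eqP.
  apply: (frob_twist_eq0 _ _ Nc1); apply/eqP; rewrite frobB -subr_eq0.
  by apply/eqP; rewrite -[RHS](subrr (L x)) {2}Lxy /L; ring.
have [g gK Kg] := injF_bij L_inj.
by exists (g w); rewrite -[RHS]Kg.
Qed.

Lemma phiE (v : vec3 F) : phi q v = V3 (frob q (c3 v)) (frob q (c1 v)) (frob q (c2 v)).
Proof. by []. Qed.

Definition Tline_meet d e : vec3 F :=
  V3 (frob q d * frob q (frob q d)) (frob q e * frob q (frob q e))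
     (- (frob q d * frob q (frob q e))).

Lemma phi_line_T_meetE d e :
  cross (phi q (V3 d e 0)) (phi q (phi q (V3 d e 0))) = Tline_meet d e.
Proof. rewrite !phiE /cross /= !frob0; congr V3; ring. Qed.

Lemma phi_line_T_det d e :
  det3 (V3 d e 0) (phi q (V3 d e 0)) (phi q (phi q (V3 d e 0))) =
  qnorm q d + qnorm q e.
Proof. rewrite /det3 phi_line_T_meetE /dot /qnorm /=; ring. Qed.

Lemma inFig_TE P : ~ onl P (mT F) -> (inFig q (T F) P <-> inFF q (T F) P).
Proof.
move=> P_off_mT; split=> [[[_ P_on] | //] | ]; last by right.
case: P_off_mT; move: P_on; rewrite /onl /T !phiE /cross /dot /= !frob0 !frob1.
by rewrite !(mul0r, mulr0, subr0, sub0r, oppr0, mul1r, mulr1, add0r, addr0).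
Qed.

Lemma inFF_TE P : inFF q (T F) P <-> nz P /\ exists d e,
  qnorm q d + qnorm q e != 0 /\ prop P (Tline_meet d e).
Proof.
split=> -[nzP PF]; split=> //.
- case: PF => -[d e f] [l_III [T_l P_meet]].
  move: T_l; rewrite /onl /T /dot /= !mulr0 !add0r mulr1 => f0; subst f.
  exists d, e; rewrite -phi_line_T_det -phi_line_T_meetE.
  by split=> //; move/typeIII_lineE: l_III.
- case: PF => d [e [N_de P_meet]]; exists (V3 d e 0).
  split; first by apply/typeIII_lineE; rewrite phi_line_T_det.
  by rewrite phi_line_T_meetE; split=> //; rewrite /onl /T /dot /=; ring.
Qed.

Lemma Tline_meet_affine a b :
  (exists d e, qnorm q d + qnorm q e != 0 /\ prop (V3 a b 1) (Tline_meet d e)) <->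
  a * frob q b = 1 /\ qnorm q b != 1.
Proof.
split=> [[d [e [N_de [k [_ [a_def b_def /esym k_def]]]]]] | [ab1 Nb1]].
  have fd0 : frob q d != 0.
    by apply: contra_eq_neq k_def => ->; rewrite mul0r oppr0 mulr0 eq_sym oner_neq0.
  have f2d0 : frob q (frob q d) != 0 by rewrite frob_eq0.
  have b_fd : b * frob q d = - frob q e.
    by rewrite b_def -[RHS]mulr1 -k_def; ring.
  have a_f2e : a * frob q (frob q e) = - frob q (frob q d).
    by rewrite a_def -[RHS]mulr1 -k_def; ring.
  split.
    apply: (mulIf f2d0); rewrite mul1r -mulrA -frobM b_fd frobN mulrN a_f2e.
    exact: opprK.
  apply: contraNneq N_de => Nb1.
  have /(congr1 (qnorm q)) := b_fd; rewrite qnormM qnormN !qnorm_frob Nb1 mul1r.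
  by move=> ->; rewrite addNr.
have fb0 : frob q b != 0.
  by apply: contra_eq_neq ab1 => ->; rewrite mulr0 eq_sym oner_neq0.
exists 1, (- frob q (frob q b)); split.
  by rewrite qnormN !qnorm_frob /qnorm !frob1 !mul1r subr_eq0 eq_sym.
exists (frob q b)^-1; split; first by rewrite invr_eq0.
have -> : a = (frob q b)^-1 by apply: (mulIf fb0); rewrite ab1 mulVf.
rewrite /Tline_meet /scale !frob1 !frobN !frob3 /=.
by congr V3; field.
Qed.

Lemma inFig_T_affine a b p3 : p3 != 0 ->
  inFig q (T F) (scale p3 (V3 a b 1)) <-> a * frob q b = 1 /\ qnorm q b != 1.
Proof.
move=> p30; have p3_1 : p3 * 1 != 0 by rewrite mulr1.
rewrite inFig_TE; last by rewrite /onl /mT /dot /scale /= !mul0r !add0r mul1r; apply/eqP.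
rewrite inFF_TE -Tline_meet_affine.
split=> [[_ [d [e [N_de P_meet]]]] | [d [e [N_de ab_meet]]]].
  by exists d, e; split; last exact/(prop_scalel _ _ _ p30).
split; first by case=> _ [_ /eqP]; rewrite (negbTE p3_1).
by exists d, e; split; last exact/(prop_scalel _ _ _ p30).
Qed.

Definition proj_vec a b x : vec3 F :=
  V3 (x - a * frob q (frob q x)) (frob q x - b * frob q (frob q x)) 0.

Definition proj_set a b R : Prop := exists x, x != 0 /\ prop R (proj_vec a b x).

Lemma frob_ptE x : frob_pt q x = V3 x (frob q x) (frob q (frob q x)).
Proof. by rewrite /frob_pt /frob -exprM expnS expn1. Qed.

Lemma proj_from_affine a b p3 R : p3 != 0 ->
  proj_from q (scale p3 (V3 a b 1)) R <-> proj_set a b R.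
Proof.
move=> p30.
have projE x : cross (cross (scale p3 (V3 a b 1)) (frob_pt q x)) (mT F) =
               scale p3 (proj_vec a b x).
  by rewrite frob_ptE /cross /mT /scale /proj_vec /=; congr V3; ring.
by split=> -[x [x0 Rx]]; exists x; split=> //; move: Rx; rewrite projE prop_scaler.
Qed.

Lemma proj_vec_nz a b p3 x : p3 != 0 -> ~ inPsub q (scale p3 (V3 a b 1)) ->
  x != 0 -> nz (proj_vec a b x).
Proof.
move=> p30 P_off x0 [/eqP + [/eqP + _]]; rewrite !subr_eq0 => /eqP x_def /eqP fx_def.
apply: P_off.
have f2x0 : frob q (frob q x) != 0 by rewrite !frob_eq0.
exists x; split=> //; exists (p3 / frob q (frob q x)); split.
  by rewrite mulf_neq0 ?invr_eq0.
rewrite frob_ptE /scale /=.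
by congr V3; [rewrite {2}x_def | rewrite {2}fx_def | idtac]; field.
Qed.

Lemma proj_vec_rescale a b x : a * frob q b = 1 ->
  let w := x - frob q (frob q b) * frob q x in
  scale w (proj_vec a b x) =
  V3 (w * frob q (frob q w) * - a) (frob q (w * frob q (frob q w))) 0.
Proof.
move=> ab1 w.
have fw : frob q w = frob q x - b * frob q (frob q x) by rewrite frobB frobM frob3.
have f2w : frob q (frob q w) = frob q (frob q x) - frob q b * x.
  by rewrite fw frobB frobM frob3.
rewrite /scale /proj_vec /= frobM frob3 f2w fw mulr0; congr V3; last exact: mulrC.
transitivity (w * (x * (a * frob q b) - a * frob q (frob q x))); last by ring.
by rewrite ab1 mulr1.
Qed.

Lemma proj_set_Tsls a b :
  a * frob q b = 1 -> qnorm q b != 1 -> is_Tsls q (proj_set a b).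
Proof.
move=> ab1 Nb1; have Nf2b1 : qnorm q (frob q (frob q b)) != 1 by rewrite !qnorm_frob.
exists (- a); split.
  by rewrite oppr_eq0; apply: contra_eq_neq ab1 => ->; rewrite mul0r eq_sym oner_neq0.
move=> R _; split.
  case=> x [x0 R_x]; have := proj_vec_rescale a b x ab1; set w := _ - _ => w_proj.
  have w0 : w != 0.
    by apply: contra_neq x0 => /eqP; rewrite subr_eq0 => /eqP/(frob_twist_eq0 _ _ Nf2b1).
  exists (w * frob q (frob q w)); split; first by rewrite mulf_neq0 // !frob_eq0.
  apply: prop_trans R_x _; apply/prop_sym; exists w; split=> //; exact: w_proj.
case=> y [y0 R_y].
pose w := frob q (frob q y^-1); have w0 : w != 0 by rewrite !frob_eq0 invr_eq0.
have [x x_w] := frob_twist_surj (frob q (frob q b)) w Nf2b1.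
have x0 : x != 0 by apply: contra_neq w0 => x0; rewrite -x_w x0 frob0 mulr0 subrr.
have := proj_vec_rescale a b x ab1; rewrite x_w => w_proj.
have N_w_y : w * frob q (frob q w) = qnorm q w * y.
  by rewrite /qnorm /w !frob3; field.
exists x; split=> //; apply: prop_trans R_y _.
apply: (@prop_trans _ _ (scale (qnorm q w) (V3 (y * - a) (y ^+ q) 0))).
  by apply/prop_sym/prop_scale; rewrite qnorm_eq0.
exists w; split=> //; rewrite w_proj N_w_y frobM frob_qnorm.
by rewrite /scale /= mulr0 mulrA.
Qed.

Lemma proj_set_Tsls_norm a b :
  (forall x, x != 0 -> nz (proj_vec a b x)) -> is_Tsls q (proj_set a b) ->
  exists2 th, th != 0 &
    (forall x, qnorm q (c1 (proj_vec a b x)) = qnorm q th * qnorm q (c2 (proj_vec a b x)))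
    /\ (forall x, x != 0 -> c1 (proj_vec a b x) != 0).
Proof.
move=> proj_nz [th [th0 Tsls]]; exists th => //.
have proj_S x : x != 0 -> exists c y, [/\ c != 0, y != 0 &
    proj_vec a b x = scale c (V3 (y * th) (frob q y) 0)].
  move=> x0; have /(Tsls _ (proj_nz x x0)) : proj_set a b (proj_vec a b x).
    by exists x; split=> //; exact: prop_refl.
  by case=> y [y0 [c [c0 proj_def]]]; exists c, y.
split=> [x | x x0].
  have [->|x0] := eqVneq x 0.
    by rewrite /proj_vec /= !frob0 !mulr0 !subrr /qnorm !frob0 !mul0r mulr0.
  have [c [y [_ _ ->]]] := proj_S x x0.
  by rewrite /= !qnormM qnorm_frob; ring.
have [c [y [c0 y0 ->]]] := proj_S x x0.
by rewrite /= !mulf_neq0.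
Qed.

Lemma proj_norm_identity_coef a b n :
  (forall x, qnorm q (c1 (proj_vec a b x)) = n * qnorm q (c2 (proj_vec a b x))) ->
  a = - n * (b * frob q (frob q b)) /\ a * frob q a = - n * b.
Proof.
move=> norm_id.
set a' := frob q a; set a'' := frob q (frob q a).
set b' := frob q b; set b'' := frob q (frob q b).
pose s := [:: (1 - a * a' * a'' - n * (1 - b * b' * b''), (1 + q * 1 + q * q * 1)%N);
  (- a'' - n * (b' * b''), (1 + q * 2 + q * q * 0)%N);
  (- a' - n * (b * b'), (2 + q * 0 + q * q * 1)%N);
  (a' * a'' + n * b', (2 + q * 1 + q * q * 0)%N);
  (- a - n * (b * b''), (0 + q * 1 + q * q * 2)%N);
  (a * a'' + n * b'', (0 + q * 2 + q * q * 1)%N);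
  (a * a' + n * b, (1 + q * 0 + q * q * 2)%N)].
have monomial x i j k : x ^+ i * frob q x ^+ j * frob q (frob q x) ^+ k =
    x ^+ (i + q * j + q * q * k).
  by rewrite /frob -!exprM !exprD mulnA.
have : all (fun ce => ce.1 == 0) s.
  apply: fin_monomials_free => [||x].
  - by rewrite /= !addn_gt0 !muln_gt0 (ltnW q_gt1) ?orbT.
  - by rewrite card_F cubic_exponents_uniq ?q_gt1.
  rewrite !big_cons big_nil addr0 -!monomial /= !addrA -cubic_norm_form_expansion.
  transitivity (qnorm q (c1 (proj_vec a b x)) - n * qnorm q (c2 (proj_vec a b x))).
    by rewrite /qnorm /proj_vec /= !frobB !frobM !frob3.
  by rewrite norm_id subrr.
rewrite /= => /and5P[_ _ _ _ /and3P[/eqP c4 _ /andP[/eqP c6 _]]].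
split; apply/eqP; rewrite -subr_eq0; [rewrite -oppr_eq0|]; apply/eqP.
  by rewrite -[RHS]c4; ring.
by rewrite -[RHS]c6; ring.
Qed.

Lemma qnorm1_twisted_root a :
  qnorm q a = 1 -> exists2 x, x != 0 & x = a * frob q (frob q x).
Proof.
move=> Na1; pose L x := x + a * frob q (frob q x) + a * frob q (frob q a) * frob q x.
have [x1 Lx1 | L0] := pickP (fun x => L x != 0).
  (* x - a x^q^2 takes the value (1 - N(a)) x1 at L x1 *)
  exists (L x1) => //; apply/eqP; rewrite -subr_eq0 /L !frobD !frobM !frob3.
  apply/eqP; transitivity (x1 * (1 - qnorm q a)); last by rewrite Na1 subrr mulr0.
  by rewrite /qnorm; ring.
have : all (fun ce => ce.1 == 0) [:: (1, 1%N); (a, (q * q)%N); (a * frob q (frob q a), q)].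
  apply: fin_monomials_free => [||x].
  - by rewrite /= !muln_gt0 (ltnW q_gt1).
  - by rewrite card_F frob_exponents_uniq ?q_gt1.
  have /negbFE/eqP := L0 x; rewrite /L /frob -exprM.
  by rewrite !big_cons big_nil /= mul1r expr1 addr0 addrA.
by rewrite /= oner_eq0.
Qed.

Lemma proj_set_Tsls_inv a b : ~ (a = 0 /\ b = 0) ->
  (forall x, x != 0 -> nz (proj_vec a b x)) -> is_Tsls q (proj_set a b) ->
  a * frob q b = 1 /\ qnorm q b != 1.
Proof.
move=> ab_nz proj_nz Tsls.
have [th th0 [norm_id c1_nz]] := proj_set_Tsls_norm a b proj_nz Tsls.
have [a_def aa_def] := proj_norm_identity_coef a b _ norm_id.
set n := qnorm q th in a_def aa_def.
have n0 : n != 0 by rewrite qnorm_eq0.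
have b0 : b != 0.
  by apply: contra_not_neq ab_nz => b0; rewrite a_def b0 !mul0r mulr0.
have fa_def : frob q a = - n * (frob q b * b).
  by rewrite a_def !frobM frobN frob_qnorm frob3.
have nNb : n * qnorm q b = -1.
  apply: (mulfI n0); apply: (mulIf b0).
  transitivity (a * frob q a); last by rewrite aa_def; ring.
  by rewrite fa_def {1}a_def /qnorm; ring.
have ab1 : a * frob q b = 1 by rewrite a_def -[RHS]opprK -nNb /qnorm; ring.
split=> //; apply/negP => /eqP Nb1.
have Na1 : qnorm q a = 1.
  have /(congr1 (qnorm q)) := ab1; rewrite qnormM qnorm_frob Nb1 mulr1 => ->.
  by rewrite /qnorm !frob1 !mulr1.
have [x x0 x_root] := qnorm1_twisted_root a Na1.
by have := c1_nz x x0; rewrite /proj_vec /= -x_root subrr eqxx.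
Qed.

End CubicExtension.

Theorem theorem8p1 (q : nat) (F : finFieldType)
  (hq : exists p k : nat, prime p /\ q = (p ^ k.+1)%N)
  (hF : #|F| = (q ^ 3)%N)
  (P : vec3 F) (hP : nz P)
  (hPT : ~ prop P (T F))
  (hPm : ~ onl P (mT F))
  (hPsub : ~ inPsub q P) :
  inFig q (T F) P <-> is_Tsls q (proj_from q P).
Proof.
case: P hP hPT hPm hPsub => p1 p2 p3 _ hPT hPm hPsub.
have p30 : p3 != 0.
  by apply/eqP => p30; apply: hPm; rewrite /onl /dot /= p30 !mul0r mulr0 !addr0.
have P_affine : V3 p1 p2 p3 = scale p3 (V3 (p1 / p3) (p2 / p3) 1).
  by rewrite /scale /= mulr1 ![p3 * _]mulrC !divfK.
rewrite P_affine in hPT hPsub *.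
set a := p1 / p3 in hPT hPsub *; set b := p2 / p3 in hPT hPsub *.
rewrite (inFig_T_affine q hq hF a b p3 p30).
have proj_setE R : proj_set q a b R <-> proj_from q (scale p3 (V3 a b 1)) R.
  exact: iff_sym (proj_from_affine q a b p3 R p30).
split=> [[ab1 Nb1] | Tsls].
  exact: is_Tsls_ext proj_setE (proj_set_Tsls q hq hF a b ab1 Nb1).
apply: (proj_set_Tsls_inv q hq hF).
- case=> a0 b0; apply: hPT; rewrite a0 b0; exact: prop_scale.
- move=> x; exact: (proj_vec_nz q hq hF a b p3 x p30 hPsub).
- by apply: is_Tsls_ext Tsls => R; rewrite proj_setE.
Qed.
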